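(* Let $\mathcal A$ be a weighted ODCA over $\mathbb F$, $K=|Q|\cdot|C|$, $c$ a configuration with counter value $n$, $V\subseteq\mathbb F^{|Q|}$ a subspace and $S\subseteq C$. If $z$ is a minimal witness for $(c,\overline V,S,\mathbb N)$, then $|z|\le K\cdot(\max(n,K)+K^2)$.
   Context: Fix a field $\mathbb{F}$ and a finite alphabet $\Sigma$. For $n\in\mathbb N$ let $\mathrm{sgn}(n)=0$ if $n=0$ and $1$ if $n>0$. A weighted ODCA is $\mathcal{A}=((C,\delta_0,\delta_1,p_0),(Q,\lambda,\Delta,\eta))$ where $C$ is a finite nonempty set of counter states, $\delta_0:C\times\Sigma\to C\times\{0,+1\}$ and $\delta_1:C\times\Sigma\to C\times\{-1,0,+1\}$ are deterministic counter transition functions, $p_0\in C$, $Q$ is a finite nonempty set of states, $\lambda,\eta\in\mathbb{F}^{|Q|}$, and $\Delta:\Sigma\times\{0,1\}\to\mathbb{F}^{|Q|\times|Q|}$. A configuration is a triple $(x,p,n)\in\mathbb{F}^{|Q|}\times C\times\mathbb{N}$ (weight vector, counter state, counter value). Reading $a\in\Sigma$ from $(x,p,n)$ with $d=\mathrm{sgn}(n)$ and $\delta_d(p,a)=(p',e)$ leads to $(x\Delta(a,d),p',n+e)$; for each word $w$ and configuration $c$ there is a unique run of $w$ from $c$. For a subspace $V\subseteq\mathbb F^{|Q|}$ let $\overline V=\mathbb F^{|Q|}\setminus V$. For $S\subseteq C$ and $X\subseteq\mathbb N$, a word $z$ is a witness for $(c,\overline V,S,X)$ if the run of $z$ from $c$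 ends in a configuration $(x,p,n)$ with $x\in\overline V$, $p\in S$, $n\in X$; it is a minimal witness if no strictly shorter word is a witness. *)

From HB Require Import structures.
From mathcomp Require Import all_boot all_order all_algebra.
Set Implicit Arguments. Unset Strict Implicit. Unset Printing Implicit Defensive.
Import GRing.Theory.
Local Open Scope ring_scope.

(* Counter effects of delta_1 : -1, 0, +1.  Effects of delta_0 ({0,+1}) are
   encoded by a bool: false = 0, true = +1. *)
Inductive eff := EDec | EStay | EInc.

(* A weighted ODCA: counter part (C, delta0, delta1, p0) over alphabet Sigma,
   weighted part (Q, lambda, Delta, eta) with Q = 'I_q (0 < q). *)
Record wODCA (F : fieldType) (Sigma C : finType) (q : nat) := WODCA {
  delta0 : C -> Sigma -> C * bool;
  delta1 : C -> Sigma -> C * eff;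
  p0 : C;
  lam : 'rV[F]_q;
  Delta : Sigma -> bool -> 'M[F]_q;   (* second argument: sgn(n) = (0 < n) *)
  eta : 'rV[F]_q
}.

Definition config (F : fieldType) (C : finType) (q : nat) :=
  ('rV[F]_q * C * nat)%type.

Definition step (F : fieldType) (Sigma C : finType) (q : nat)
  (A : wODCA F Sigma C q) (c : config F C q) (a : Sigma) : config F C q :=
  let: (x, p, n) := c in
  if n == 0%N then
    let: (p', e) := delta0 A p a in
    (x *m Delta A a false, p', if e then n.+1 else n)
  else
    let: (p', e) := delta1 A p a in
    (x *m Delta A a true, p',
      match e with EDec => n.-1 | EStay => n | EInc => n.+1 end).

Definition run (F : fieldType) (Sigma C : finType) (q : nat)
  (A : wODCA F Sigma C q) (c : config F C q) (w : seq Sigma) : config F C q :=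
  foldl (step A) c w.

Definition witness (F : fieldType) (Sigma C : finType) (q : nat)
  (A : wODCA F Sigma C q) (c : config F C q) (V : {vspace 'rV[F]_q})
  (S : {set C}) (X : pred nat) (z : seq Sigma) : Prop :=
  let: (x, p, n) := run A c z in [/\ x \notin V, p \in S & X n].

Definition minimal_witness (F : fieldType) (Sigma C : finType) (q : nat)
  (A : wODCA F Sigma C q) (c : config F C q) (V : {vspace 'rV[F]_q})
  (S : {set C}) (X : pred nat) (z : seq Sigma) : Prop :=
  witness A c V S X z /\
  forall z' : seq Sigma, (size z' < size z)%N -> ~ witness A c V S X z'.

From mathcomp Require Import all_boot all_order all_algebra.
From mathcomp Require Import zify.
Set Implicit Arguments.
Unset Strict Implicit.
Unset Printing Implicit Defensive.
Import GRing.Theory.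

(* Fix a minimal witness z from the configuration (x, p, n).  For a position
   i <= |z| let ctl_at i be the control configuration (state, counter) reached
   after the first i letters, prefix_vec i the weight vector reached and
   suffix_mat i the product of the transition matrices along the rest of z, so
   that prefix_vec i * suffix_mat i is the final weight vector, outside V.
   Replacing a factor of z by another one that leads from the same control
   configuration to the same control configuration gives a shorter word ending
   in a state of S, whose weight therefore lies in V.  The linear-algebra lemma
   cross_terms_bound turns such families ("off-diagonal products in V, diagonal
   products outside V") into linearly independent matrices, whence:
   - cutting out loops between equal control configurations shows that each of
     them occurs at most q times, so |z| + 1 <= |C| q (H + 1), where H is the
     highest counter value of the run (length_bound);
   - for each level h in [max(1, n), H] the run has an excursion above h around
     its peak; exchanging the excursion at level h for the one at a higher level
     h', shifted down by h' - h, keeps the run valid, so each pair of endpoint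
     states occurs for at most q^2 levels: H + 1 - max(1, n) <= (|C| q)^2
     (height_bound).
   With K = q |C| this gives |z| < K (H + 1) <= K (max(n, K) + K^2). *)

Lemma size_le_fibres (I : Type) (T : finType) (key : I -> T) (s : seq I)
    (B : nat) :
  (forall k : T, size [seq i <- s | key i == k] <= B) -> size s <= #|T| * B.
Proof.
move=> fibre_le.
rewrite -sum1_size (partition_big key xpredT) //= -sum_nat_const.
by apply: leq_sum => k _; rewrite sum1_count -size_filter fibre_le.
Qed.

Section CrossTerms.
Local Open Scope ring_scope.

(* Linear-algebra core: if, along an ord-sorted list s, the products
   u_i e_j r_i with i before j lie in V while u_i e_i r_i does not, then the
   matrices e_i (i in s) are linearly independent, so there are at most a * b
   of them. *)
Lemma cross_terms_bound (F : fieldType) (I : eqType) (a b q : nat)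
  (V : {vspace 'rV[F]_q}) (ord : rel I) (ord_trans : transitive ord)
  (u : I -> 'rV[F]_a) (e : I -> 'M[F]_(a, b)) (r : I -> 'M[F]_(b, q))
  (s : seq I) :
  sorted ord s ->
  (forall i j, i \in s -> j \in s -> ord i j -> u i *m e j *m r i \in V) ->
  (forall i, i \in s -> u i *m e i *m r i \notin V) ->
  (size s <= a * b)%N.
Proof.
move=> s_sorted cross_in diag_out.
suff /eqP free_s : free (map e s).
  rewrite -(size_map e) -free_s (leq_trans (dimvS (subvf _))) //.
  by rewrite dimvf dim_matrix.
elim: s s_sorted cross_in diag_out => [|i s IHs] s_sorted cross_in diag_out.
  by rewrite /free span_nil dimv0.
rewrite /= free_cons; apply/andP; split; last first.
  apply: IHs => [||j j_s]; first exact: path_sorted s_sorted.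
    by move=> j k j_s k_s; apply: cross_in; rewrite inE ?j_s ?k_s orbT.
  by apply: diag_out; rewrite inE j_s orbT.
(* the e_j, j in s, lie in the preimage of V under  M |-> u_i M r_i *)
pose f := linfun (mulmxr (r i) \o mulmx (u i)) : 'Hom('M[F]_(a, b), 'rV[F]_q).
have span_sub : (<<map e s>> <= f @^-1: V)%VS.
  apply/span_subvP => _ /mapP [j j_s ->]; rewrite -memv_preim lfunE /=.
  apply: cross_in; rewrite ?inE ?j_s ?eqxx ?orbT //.
  exact: (allP (order_path_min ord_trans s_sorted)).
apply/negP => /(subvP span_sub); rewrite -memv_preim lfunE /=.
by apply/negP/diag_out; rewrite inE eqxx.
Qed.
End CrossTerms.

Definition first_index (P : pred nat) (N : nat) : nat := find P (iota 0 N.+1).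

Lemma first_indexP (P : pred nat) (N : nat) : P N ->
  [/\ first_index P N <= N, P (first_index P N)
    & forall k, k < first_index P N -> ~~ P k].
Proof.
move=> PN; have has_P : has P (iota 0 N.+1).
  by apply/hasP; exists N => //; rewrite mem_iota; lia.
have lt_N : first_index P N < N.+1.
  by move: has_P; rewrite has_find size_iota.
split=> // [|k lt_k]; first by have := nth_find 0 has_P; rewrite nth_iota.
have := before_find 0 lt_k; rewrite nth_iota ?add0n => [->|] //.
exact: ltn_trans lt_N.
Qed.

(* Excursions of a sequence cnt 0, ..., cnt m moving by steps of at most one,
   around a position s: for a level h between cnt 0 and cnt s, the sequence
   stays at least h on the interval [left_end h, right_end h] around s, and
   equals h at both ends, except that the right end may be m. *)
Section Excursions.
Variables (cnt : nat -> nat) (m s : nat).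
Hypothesis cnt_step :
  forall i, i < m -> cnt i.+1 <= (cnt i).+1 /\ cnt i <= (cnt i.+1).+1.
Hypothesis s_le_m : s <= m.

Definition left_end (h : nat) : nat :=
  s - first_index (fun k => cnt (s - k) <= h) s.

Definition right_end (h : nat) : nat :=
  s + first_index (fun k => (cnt (s + k) <= h) || (s + k == m)) (m - s).

Lemma left_endP h : cnt 0 <= h -> h <= cnt s ->
  [/\ left_end h <= s, cnt (left_end h) = h
    & forall j, left_end h <= j <= s -> h <= cnt j].
Proof.
move=> h_ge h_le.
have P_s : cnt (s - s) <= h by rewrite subnn.
have [k_le Pk before] := @first_indexP (fun k => cnt (s - k) <= h) s P_s.
have above : forall j, left_end h < j <= s -> h < cnt j.
  move=> j /andP [lt_j j_le]; rewrite ltnNge.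
  have lt_k : s - j < first_index (fun k => cnt (s - k) <= h) s.
    by rewrite /left_end in lt_j; lia.
  by have := before _ lt_k; rewrite subKn.
have at_h : cnt (left_end h) = h.
  apply/eqP; rewrite eqn_leq Pk /=.
  have [lt_s|ge_s] := ltnP (left_end h) s; last first.
    by rewrite (_ : left_end h = s) //; apply/anti_leq; rewrite ge_s leq_subr.
  have := above (left_end h).+1; rewrite lt_s ltnSn => /(_ isT).
  by have [] := cnt_step (leq_trans lt_s s_le_m); lia.
split=> // [|j /andP [j_ge j_le]]; first exact: leq_subr.
have [lt_j|] := ltnP (left_end h) j; first by rewrite ltnW // above ?lt_j.
by move=> j_le'; rewrite (_ : j = left_end h) ?at_h //; lia.
Qed.

Lemma right_endP h : h <= cnt s ->
  [/\ s <= right_end h <= m, forall j, s <= j <= right_end h -> h <= cnt j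
    & right_end h != m -> cnt (right_end h) = h].
Proof.
move=> h_le.
pose P k := (cnt (s + k) <= h) || (s + k == m).
have P_m : P (m - s) by rewrite /P subnKC // eqxx orbT.
have [k_le Pk before] := first_indexP P_m.
have -> : right_end h = s + first_index P (m - s) by [].
move: k_le Pk before; set k := first_index P (m - s) => k_le Pk before.
clearbody k.
have r_le : s + k <= m by rewrite -leq_subRL.
have above : forall j, s <= j < s + k -> h < cnt j /\ j != m.
  move=> j /andP [j_ge lt_j].
  have := before (j - s); rewrite ltn_subLR // => /(_ lt_j).
  by rewrite /P subnKC // negb_or -ltnNge => /andP.
have at_h : cnt (s + k) <= h -> cnt (s + k) = h.
  move=> le_h; apply/anti_leq; rewrite le_h /=.
  case: k {k_le Pk before} r_le above le_h => [|k] r_le above le_h.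
    by rewrite addn0.
  have [|above_h _] := above (s + k); first by rewrite leq_addr addnS ltnSn.
  rewrite addnS in r_le *; case: (cnt_step r_le) => _ /(leq_trans above_h).
  by rewrite ltnS.
split=> [|j /andP [j_ge j_le]|ne_m]; first by rewrite leq_addr r_le.
  have [lt_j|] := ltnP j (s + k).
    by have /above [/ltnW] : s <= j < s + k by rewrite j_ge.
  move=> le_j; rewrite (_ : j = s + k); last exact/anti_leq/andP.
  by have [/at_h ->|/ltnW] := leqP (cnt (s + k)) h.
by apply: at_h; move: Pk; rewrite /P (negbTE ne_m) orbF.
Qed.

Lemma excursion_above h : cnt 0 <= h -> h <= cnt s ->
  left_end h <= right_end h /\
  forall j, left_end h <= j <= right_end h -> h <= cnt j.
Proof.
move=> h_ge h_le.
have [le_s _ left_above] := left_endP h_ge h_le.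
have [/andP [s_le _] right_above _] := right_endP h_le.
split=> [|j /andP [j_ge j_le]]; first exact: leq_trans s_le.
have [j_s|s_j] := leqP j s; first by rewrite left_above ?j_ge.
by rewrite right_above // (ltnW s_j) j_le.
Qed.

(* Excursions at higher levels are strictly nested on the left and nested on
   the right (the right ends may both be m). *)
Lemma excursion_nested h h' : cnt 0 <= h -> h < h' -> h' <= cnt s ->
  left_end h < left_end h' /\ right_end h' <= right_end h.
Proof.
move=> h_ge lt_h h'_le.
have h_le : h <= cnt s := ltnW (leq_trans lt_h h'_le).
have h'_ge : cnt 0 <= h' := leq_trans h_ge (ltnW lt_h).
have [l_le left_h _] := left_endP h_ge h_le.
have [_ _ left_above'] := left_endP h'_ge h'_le.
have [/andP [s_le _] _ right_h] := right_endP h_le.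
have [/andP [_ r'_le] right_above' _] := right_endP h'_le.
split; [rewrite ltnNge | rewrite leqNgt]; apply/negP.
  move=> le_l; have := left_above' (left_end h).
  by rewrite le_l l_le left_h => /(_ isT); rewrite leqNgt lt_h.
move=> lt_r; have ne_m : right_end h != m.
  by rewrite neq_ltn (leq_trans lt_r r'_le).
have := right_above' (right_end h).
by rewrite s_le (ltnW lt_r) right_h // => /(_ isT); rewrite leqNgt lt_h.
Qed.

End Excursions.

(* A run splits into its control part, the deterministic evolution of the pair
   (state, counter) which does not depend on weights, and its weight part, the
   product of the matrices Delta a (sgn counter) read along the way. *)
Section ControlRun.
Local Open Scope ring_scope.
Variables (F : fieldType) (Sigma C : finType) (q : nat) (A : wODCA F Sigma C q).

Definition ctl_step (c : C * nat) (a : Sigma) : C * nat :=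
  let: (p, n) := c in
  if n == 0%N then let: (p', e) := delta0 A p a in (p', if e then n.+1 else n)
  else let: (p', e) := delta1 A p a in
    (p', match e with EDec => n.-1 | EStay => n | EInc => n.+1 end).
Arguments ctl_step : simpl never.

Definition step_mat (c : C * nat) (a : Sigma) : 'M[F]_q :=
  Delta A a (c.2 != 0%N).

Definition ctl_run (c : C * nat) (w : seq Sigma) : C * nat :=
  foldl ctl_step c w.

Fixpoint run_mat (c : C * nat) (w : seq Sigma) : 'M[F]_q :=
  if w is a :: w' then step_mat c a *m run_mat (ctl_step c a) w' else 1%:M.

Lemma step_ctl_mat x p n a :
  step A (x, p, n) a =
  (x *m step_mat (p, n) a, (ctl_step (p, n) a).1, (ctl_step (p, n) a).2).
Proof.
rewrite /step /ctl_step /step_mat /=; case: eqP => [->|_] /=.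
  by case: (delta0 A p a) => p' [].
by case: (delta1 A p a) => p' [].
Qed.

Lemma run_ctl_mat w x p n :
  run A (x, p, n) w =
  (x *m run_mat (p, n) w, (ctl_run (p, n) w).1, (ctl_run (p, n) w).2).
Proof.
elim: w x p n => [|a w IHw] x p n; first by rewrite /= mulmx1.
have -> : run A (x, p, n) (a :: w) = run A (step A (x, p, n) a) w by [].
rewrite step_ctl_mat /ctl_run /= -/(ctl_run _ _).
by case: (ctl_step (p, n) a) => p' n'; rewrite IHw mulmxA.
Qed.

Lemma run_mat_cat c u v :
  run_mat c (u ++ v) = run_mat c u *m run_mat (ctl_run c u) v.
Proof. by elim: u c => [|a u IHu] c /=; rewrite ?mul1mx // IHu mulmxA. Qed.

Lemma ctl_run_cat c u v : ctl_run c (u ++ v) = ctl_run (ctl_run c u) v.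
Proof. exact: foldl_cat. Qed.

Lemma ctl_step_unit c a :
  ((ctl_step c a).2 <= c.2.+1)%N /\ (c.2 <= (ctl_step c a).2.+1)%N.
Proof.
case: c => p k; rewrite /ctl_step; case: eqP => [->|_].
  by case: (delta0 A p a) => p' [].
by case: (delta1 A p a) => p' [] /=; lia.
Qed.

Lemma ctl_step_shift p k d a : (d < k)%N ->
  ctl_step (p, (k - d)%N) a =
    ((ctl_step (p, k) a).1, ((ctl_step (p, k) a).2 - d)%N)
  /\ step_mat (p, (k - d)%N) a = step_mat (p, k) a.
Proof.
move=> lt_dk; have k_pos : (k == 0) = false.
  by rewrite eqn0Ngt (leq_ltn_trans (leq0n d) lt_dk).
rewrite /ctl_step /step_mat /= subn_eq0 leqNgt lt_dk k_pos; split=> //.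
by case: (delta1 A p a) => p' [] /=; congr pair; lia.
Qed.

Lemma run_shift w p k d :
  (forall i, (i <= size w)%N -> (d < (ctl_run (p, k) (take i w)).2)%N) ->
  run_mat (p, (k - d)%N) w = run_mat (p, k) w /\
  ctl_run (p, (k - d)%N) w =
    ((ctl_run (p, k) w).1, ((ctl_run (p, k) w).2 - d)%N).
Proof.
elim: w p k => [|a w IHw] p k above //=.
have [-> ->] := ctl_step_shift p a (above 0%N isT).
case E: (ctl_step (p, k) a) => [p' k'].
have above' :
    forall i, (i <= size w)%N -> (d < (ctl_run (p', k') (take i w)).2)%N.
  by move=> i le_i; have := above i.+1 le_i; rewrite /= /ctl_run /= E.
by have [-> ->] := IHw p' k' above'.
Qed.

End ControlRun.

Section MinimalWitness.
Variables (F : fieldType) (Sigma C : finType) (q : nat) (A : wODCA F Sigma C q).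
Variables (x : 'rV[F]_q) (p : C) (n : nat).
Variables (V : {vspace 'rV[F]_q}) (S : {set C}) (z : seq Sigma).
Hypothesis z_min : minimal_witness A (x, p, n) V S predT z.

Local Notation m := (size z).

Definition ctl_at (i : nat) : C * nat := ctl_run A (p, n) (take i z).
Definition height (i : nat) : nat := (ctl_at i).2.
Definition prefix_vec (i : nat) : 'rV[F]_q :=
  (x *m run_mat A (p, n) (take i z))%R.
Definition suffix_mat (i : nat) : 'M[F]_q := run_mat A (ctl_at i) (drop i z).

Lemma witnessE w : witness A (x, p, n) V S predT w <->
  (x *m run_mat A (p, n) w)%R \notin V /\ (ctl_run A (p, n) w).1 \in S.
Proof. by rewrite /witness run_ctl_mat; split=> [[]|[]]. Qed.

Lemma final_in_S : (ctl_run A (p, n) z).1 \in S.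
Proof. by have [] := (witnessE z).1 z_min.1. Qed.

Lemma shorter_in_V w : size w < m -> (ctl_run A (p, n) w).1 \in S ->
  (x *m run_mat A (p, n) w)%R \in V.
Proof.
move=> lt_w w_S; apply/negPn/negP => w_V.
by apply: (z_min.2 w lt_w); apply/witnessE.
Qed.

Lemma ctl_suffix i : ctl_run A (ctl_at i) (drop i z) = ctl_run A (p, n) z.
Proof. by rewrite /ctl_at -ctl_run_cat cat_take_drop. Qed.

Lemma split_notin_V i : (prefix_vec i *m suffix_mat i)%R \notin V.
Proof.
rewrite /prefix_vec /suffix_mat -mulmxA -run_mat_cat cat_take_drop.
by have [] := (witnessE z).1 z_min.1.
Qed.

Lemma height0 : height 0 = n.
Proof. by rewrite /height /ctl_at take0. Qed.

Lemma height_step i : i < m ->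
  height i.+1 <= (height i).+1 /\ height i <= (height i.+1).+1.
Proof.
move=> lt_i; have : 0 < size (drop i z) by rewrite size_drop subn_gt0.
case E: (drop i z) => [|a t] // _.
suff -> : height i.+1 = (ctl_step A (ctl_at i) a).2 by apply: ctl_step_unit.
by rewrite /height /ctl_at -addn1 takeD E /= take0 ctl_run_cat.
Qed.

(* Cutting out a loop between equal control configurations. *)
Lemma pump_out i j : i < j <= m -> ctl_at i = ctl_at j ->
  (prefix_vec i *m suffix_mat j)%R \in V.
Proof.
move=> /andP [lt_ij le_j] same_ctl.
have := shorter_in_V (w := take i z ++ drop j z).
rewrite size_cat size_drop size_takel ?(leq_trans (ltnW lt_ij) le_j) //.
rewrite ctl_run_cat run_mat_cat -/(ctl_at i) same_ctl ctl_suffix mulmxA.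
by apply=> //; [lia | exact: final_in_S].
Qed.

Definition peak : nat := [arg max_(i > (ord0 : 'I_m.+1)) height i].

Local Notation top := (height peak).

Lemma peak_le : peak <= m.
Proof. by rewrite /peak -ltnS ltn_ord. Qed.

Lemma height_le_top i : i <= m -> height i <= top.
Proof.
rewrite -ltnS => lt_i; rewrite /peak.
by case: arg_maxnP => // k _ /(_ (Ordinal lt_i)); apply.
Qed.

(* Each control configuration occurs at most q times along the run. *)
Lemma length_bound : m.+1 <= #|C| * top.+1 * q.
Proof.
pose key i := ((ctl_at i).1, inord (height i) : 'I_top.+1).
have key_ctl i j : i <= m -> j <= m -> key i = key j -> ctl_at i = ctl_at j.
  move=> le_i le_j [same_state /(congr1 val)].
  rewrite /= !inordK ?ltnS ?height_le_top // => same_height.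
  by move: same_state same_height; rewrite /height;
    case: (ctl_at i) (ctl_at j) => [? ?] [? ?] /= -> ->.
have := @size_le_fibres _ _ key (iota 0 m.+1) q.
rewrite size_iota card_prod card_ord; apply=> k.
set s := filter _ _.
have mem_s i : i \in s -> i <= m /\ key i = k.
  rewrite /s mem_filter mem_iota add0n ltnS.
  by move=> /andP [/eqP -> /andP [_ le_i]].
rewrite -size_rev -[q]mul1n.
apply: (@cross_terms_bound F _ 1 q q V (fun i j => j < i) _ (fun=> 1%:M)%R
  prefix_vec suffix_mat).
- by move=> j i l lt_ji lt_lj; apply: ltn_trans lt_lj lt_ji.
- rewrite rev_sorted; apply: sorted_filter; first exact: ltn_trans.
  exact: iota_ltn_sorted.
- move=> i j; rewrite !mem_rev mul1mx.
  move=> /mem_s [le_i key_i] /mem_s [le_j key_j] lt_ji.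
  by apply: pump_out; rewrite ?lt_ji // (key_ctl j i) // key_i key_j.
- by move=> i _; rewrite mul1mx split_notin_V.
Qed.

Local Notation lo := (left_end height peak).
Local Notation hi := (right_end height m peak).

Lemma excursionP h : n <= h -> h <= top ->
  [/\ lo h <= hi h <= m, height (lo h) = h,
      forall j, lo h <= j <= hi h -> h <= height j
    & hi h != m -> height (hi h) = h].
Proof.
move=> h_ge h_le; rewrite -height0 in h_ge.
have [_ lo_h _] := left_endP height_step peak_le h_ge h_le.
have [/andP [_ hi_le] _ hi_h] := right_endP height_step peak_le h_le.
have [lo_le above] := excursion_above height_step peak_le h_ge h_le.
by rewrite lo_le hi_le.
Qed.

Definition mid (h : nat) : seq Sigma := take (hi h - lo h) (drop (lo h) z).
Definition mid_mat (h : nat) : 'M[F]_q := run_mat A (ctl_at (lo h)) (mid h).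

Lemma mid_run h : lo h <= hi h ->
  (prefix_vec (lo h) *m mid_mat h = prefix_vec (hi h))%R /\
  ctl_run A (ctl_at (lo h)) (mid h) = ctl_at (hi h).
Proof.
move=> le_lh; rewrite /prefix_vec /mid_mat /ctl_at.
rewrite -[in take (hi h) z](subnKC le_lh) takeD.
by rewrite run_mat_cat ctl_run_cat mulmxA.
Qed.

Lemma mid_prefix h i : lo h + i <= hi h ->
  ctl_run A (ctl_at (lo h)) (take i (mid h)) = ctl_at (lo h + i).
Proof.
move=> le_i; have le_diff : i <= hi h - lo h.
  by rewrite leq_subRL // (leq_trans (leq_addr i _)).
by rewrite /mid take_takel // /ctl_at takeD ctl_run_cat.
Qed.

Lemma size_mid h : hi h <= m -> size (mid h) = hi h - lo h.
Proof. by move=> le_m; rewrite /mid size_takel // size_drop leq_sub2r. Qed.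

Lemma mid_shift h h' : 0 < h -> n <= h -> h < h' -> h' <= top ->
  (ctl_at (lo h)).1 = (ctl_at (lo h')).1 ->
  run_mat A (ctl_at (lo h)) (mid h') = mid_mat h' /\
  ctl_run A (ctl_at (lo h)) (mid h') =
    ((ctl_at (hi h')).1, height (hi h') - (h' - h)).
Proof.
move=> h_pos h_ge lt_h h'_le same_lo.
have [/andP [le' le_m'] lo_h' above' _] :=
  excursionP (leq_trans h_ge (ltnW lt_h)) h'_le.
have [_ lo_h _ _] := excursionP h_ge (ltnW (leq_trans lt_h h'_le)).
have E : ctl_at (lo h) = ((ctl_at (lo h')).1, h' - (h' - h)).
  move: same_lo lo_h; rewrite /height.
  by case: (ctl_at (lo h)) => st k /= -> ->; rewrite (subKn (ltnW lt_h)).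
have E' : ctl_at (lo h') = ((ctl_at (lo h')).1, h').
  by move: lo_h'; rewrite /height; case: (ctl_at (lo h')) => st k /= ->.
have above_d : forall i, i <= size (mid h') ->
    h' - h < (ctl_run A ((ctl_at (lo h')).1, h') (take i (mid h'))).2.
  move=> i; rewrite size_mid // -E' => le_i.
  have le_hi : lo h' + i <= hi h' by rewrite -leq_subRL.
  rewrite mid_prefix //; apply: leq_trans (above' _ _); first by lia.
  by rewrite leq_addr le_hi.
have [shift_mat shift_ctl] := run_shift above_d.
by rewrite E shift_mat shift_ctl -E' (mid_run le').2.
Qed.

(* Replacing the excursion at level h by the higher one at level h' yields a
   shorter witness candidate when the endpoint states agree. *)
Lemma pump_excursion h h' : 0 < h -> n <= h -> h < h' -> h' <= top ->
  (ctl_at (lo h)).1 = (ctl_at (lo h')).1 ->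
  (ctl_at (hi h)).1 = (ctl_at (hi h')).1 ->
  (prefix_vec (lo h) *m mid_mat h' *m suffix_mat (hi h))%R \in V.
Proof.
move=> h_pos h_ge lt_h h'_le same_lo same_hi.
have h_le : h <= top := ltnW (leq_trans lt_h h'_le).
have [/andP [le le_m] _ _ hi_h] := excursionP h_ge h_le.
have [/andP [le' le_m'] _ _ hi_h'] :=
  excursionP (leq_trans h_ge (ltnW lt_h)) h'_le.
have h_ge0 : height 0 <= h by rewrite height0.
have [lt_lo le_hi] := excursion_nested height_step peak_le h_ge0 lt_h h'_le.
have [shift_mat shift_ctl] := mid_shift h_pos h_ge lt_h h'_le same_lo.
have := shorter_in_V (w := take (lo h) z ++ mid h' ++ drop (hi h) z).
rewrite !size_cat size_takel ?size_mid ?size_drop ?(leq_trans le le_m) //.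
rewrite !ctl_run_cat !run_mat_cat -/(ctl_at (lo h)) shift_ctl shift_mat.
have shorter : lo h + (hi h' - lo h' + (m - hi h)) < m.
  by move: lt_lo le_hi le' le_m; clear; lia.
rewrite -/(prefix_vec (lo h)) mulmxA => /(_ shorter).
have [hi_m|hi_ne] := eqVneq (hi h) m.
  rewrite /suffix_mat hi_m drop_size /= !mulmx1 -same_hi hi_m; apply.
  by have := final_in_S; rewrite -[in ctl_run _ _ z](take_size z).
have -> : ((ctl_at (hi h')).1, height (hi h') - (h' - h)) = ctl_at (hi h).
  have hi_ne' : hi h' != m.
    by rewrite neq_ltn (leq_ltn_trans le_hi) // ltn_neqAle hi_ne.
  rewrite hi_h' // -same_hi (subKn (ltnW lt_h)).
  by rewrite [RHS]surjective_pairing -/(height (hi h)) (hi_h hi_ne).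
rewrite ctl_suffix mulmxA; apply; exact: final_in_S.
Qed.

(* Each pair of endpoint states occurs for at most q^2 levels. *)
Lemma height_bound : top.+1 - maxn 1 n <= #|C| * #|C| * (q * q).
Proof.
pose key h := ((ctl_at (lo h)).1, (ctl_at (hi h)).1).
have := @size_le_fibres _ _ key (iota (maxn 1 n) (top.+1 - maxn 1 n)) (q * q).
rewrite size_iota card_prod; apply=> k.
set s := filter _ _.
have mem_s h : h \in s -> [/\ 0 < h, n <= h, h <= top & key h = k].
  rewrite /s mem_filter mem_iota => /andP [/eqP -> /andP [h_ge h_lt]].
  by move: (h_ge); rewrite geq_max => /andP [h_pos n_le]; split=> //; lia.
apply: (@cross_terms_bound F _ q q q V ltn ltn_trans
  (fun h => prefix_vec (lo h)) mid_mat (fun h => suffix_mat (hi h))).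
- by apply: sorted_filter; [apply: ltn_trans | apply: iota_ltn_sorted].
- move=> i j /mem_s [i_pos i_ge i_le key_i] /mem_s [_ _ j_le key_j] lt_ij.
  by move: key_i; rewrite -key_j => -[]; apply: pump_excursion.
- move=> i /mem_s [_ i_ge i_le _].
  have [/andP [le _] _ _ _] := excursionP i_ge i_le.
  by rewrite (mid_run le).1 split_notin_V.
Qed.

(* Combining both bounds: |z| < K (top + 1), and top + 1 <= max(1, n) + K^2,
   where max(1, n) <= max(n, K) since 1 <= K. *)
Lemma minimal_witness_length : 0 < q ->
  m <= q * #|C| * (maxn n (q * #|C|) + (q * #|C|) ^ 2).
Proof.
move=> q_pos; set K := q * #|C|.
have K_pos : 0 < K by rewrite muln_gt0 q_pos; apply/card_gt0P; exists p.
have K2 : #|C| * #|C| * (q * q) = K ^ 2 by rewrite /K mulnn mulnn -expnMn mulnC.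
have top_le : top.+1 <= maxn n K + K ^ 2.
  by move: height_bound K_pos; rewrite K2; lia.
apply: leq_trans (ltnW length_bound) _.
by rewrite mulnAC [#|C| * q]mulnC leq_mul2l top_le orbT.
Qed.

End MinimalWitness.

Theorem mainTheorem14 (F : fieldType) (Sigma C : finType) (q : nat)
  (Hq : (0 < q)%N) (A : wODCA F Sigma C q)
  (x : 'rV[F]_q) (p : C) (n : nat)
  (V : {vspace 'rV[F]_q}) (S : {set C}) (z : seq Sigma) :
  minimal_witness A (x, p, n) V S predT z ->
  let K := (q * #|C|)%N in
  (size z <= K * (maxn n K + K ^ 2))%N.
Proof. by move=> z_min; apply: minimal_witness_length z_min Hq. Qed.
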